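(* If $\mathcal{R}$ is a call-by-value coupled logical bisimulation, then so is $\mathcal{R}^V=\left(\mathcal{R}_1^\star,\ \mathcal{R}_2\langle\mathcal{R}_1^\star\rangle_v\cup\mathcal{R}_1^\star\right)$. Consequently: if $M\approx^v_1 N$ then $C[M]\approx^v_1 C[N]$ for every context $C$ with $C[M],C[N]$ closed; and if $E\approx^v_2 F$ then $\mathcal{E}[E]\approx^v_2\mathcal{E}[F]$ for every call-by-value evaluation context $\mathcal{E}$.
   Context: $\Lambda^\bullet$ is the set of closed $\lambda$-terms; values are closed abstractions. Call-by-value reduction on closed terms: $MN\longrightarrow MN'$ if $N\longrightarrow N'$; $MV\longrightarrow M'V$ if $M\longrightarrow M'$ and $V$ is a value; $(\lambda x.P)V\longrightarrow P[V/x]$ if $V$ is a value; $\Longrightarrow$ is the reflexive transitive closure. Contexts are generated by $C::=x\mid[\cdot]\mid C\,C\mid\lambda x.C$, possibly with several holes numbered left to right; $C[\widetilde M]$ fills the $i$-th hole with $M_i$; $C[M]$ fills every hole with $M$. For $\mathcal{R}\subseteq\Lambda^\bullet\times\Lambda^\bullet$, $\mathcal{R}^\star=\{(C[\widetilde M],C[\widetilde N]) : C\text{ a context},\ M_i\,\mathcal{R}\,N_i\ \forall i,\ C[\widetilde M],C[\widetilde N]\in\Lambda^\bullet\}$. For relations $\mathcal{R},\mathcal{R}'$ on $\Lambda^\bullet$, $\mathcal{R}\langle\mathcal{R}'\rangle_v$ is the least relation such that: $X\,\mathcal{R}\,Y$ implies $X\,\mathcal{R}\langle\mathcal{R}'\rangle_v\,Y$;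 if $M\,\mathcal{R}'\,N$ and $X\,\mathcal{R}\langle\mathcal{R}'\rangle_v\,Y$ then $MX\,\mathcal{R}\langle\mathcal{R}'\rangle_v\,NY$; if $V,W$ are values with $V\,\mathcal{R}'\,W$ and $X\,\mathcal{R}\langle\mathcal{R}'\rangle_v\,Y$ then $XV\,\mathcal{R}\langle\mathcal{R}'\rangle_v\,YW$. Call-by-value evaluation contexts: $\mathcal{E}::=[\cdot]\mid M\,\mathcal{E}\mid\mathcal{E}\,V$ ($M\in\Lambda^\bullet$, $V$ a value). A coupled relation is a pair $(\mathcal{R}_1,\mathcal{R}_2)$ of relations on $\Lambda^\bullet$ with $\mathcal{R}_1\subseteq\mathcal{R}_2$. It is a call-by-value coupled logical bisimulation if whenever $M\,\mathcal{R}_2\,N$: (1) if $M\longrightarrow M'$ then there is $N'$ with $N\Longrightarrow N'$ and $M'\,\mathcal{R}_2\,N'$; (2) if $M=\lambda x.M'$ then $N\Longrightarrow\lambda x.N'$ for some $N'$, $\lambda x.M'\,\mathcal{R}_1\,\lambda x.N'$, and for all values $P,Q$ with $P\,\mathcal{R}_1^\star\,Q$, $M'[P/x]\,\mathcal{R}_2\,N'[Q/x]$; (3) the converses of (1),(2) with $M$ and $N$ exchanged. $(\approx^v_1,\approx^v_2)$ is the componentwise union of all call-by-value coupled logical bisimulations. *)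

From Stdlib Require Import Arith.

Inductive term : Type :=
| Var : nat -> term
| App : term -> term -> term
| Lam : term -> term.

Fixpoint closed_at (k : nat) (t : term) : Prop :=
  match t with
  | Var n => n < k
  | App t u => closed_at k t /\ closed_at k u
  | Lam t => closed_at (S k) t
  end.

Definition closed (t : term) : Prop := closed_at 0 t.

Definition value (t : term) : Prop := closed t /\ exists b, t = Lam b.

(* subst k P t : replace index k by P (P closed, so no lifting is needed),
   indices above k are decremented (the binder disappears). *)
Fixpoint subst (k : nat) (P : term) (t : term) : term :=
  match t with
  | Var n => if Nat.ltb n k then Var n
             else if Nat.eqb n k then P else Var (n - 1)
  | App t u => App (subst k P t) (subst k P u)
  | Lam t => Lam (subst (S k) P t)
  end.

Definition subst0 (M' P : term) : term := subst 0 P M'.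

(* call-by-value reduction on closed terms (right-to-left) *)
Inductive step : term -> term -> Prop :=
| step_appR : forall M N N', closed M -> step N N' -> step (App M N) (App M N')
| step_appL : forall M M' V, value V -> step M M' -> step (App M V) (App M' V)
| step_beta : forall P V, closed (Lam P) -> value V ->
    step (App (Lam P) V) (subst0 P V).

Inductive steps : term -> term -> Prop :=
| steps_refl : forall M, steps M M
| steps_step : forall M M' M'', step M M' -> steps M' M'' -> steps M M''.

Definition rel := term -> term -> Prop.

(* multi-hole contexts C ::= x | [.] | C C | \x.C ; holes numbered left to right *)
Inductive ctx : Type :=
| CVar : nat -> ctx
| CHole : ctx
| CApp : ctx -> ctx -> ctx
| CLam : ctx -> ctx.

Fixpoint nholes (C : ctx) : nat :=
  match C with
  | CVar _ => 0
  | CHole => 1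
  | CApp C1 C2 => nholes C1 + nholes C2
  | CLam C => nholes C
  end.

(* fill_from k C Ms : fill the i-th hole of C (from 0) with Ms (k + i).
   Holes are filled by plain syntactic replacement (capture allowed). *)
Fixpoint fill_from (k : nat) (C : ctx) (Ms : nat -> term) : term :=
  match C with
  | CVar n => Var n
  | CHole => Ms k
  | CApp C1 C2 => App (fill_from k C1 Ms) (fill_from (k + nholes C1) C2 Ms)
  | CLam C => Lam (fill_from k C Ms)
  end.

Definition fill (C : ctx) (Ms : nat -> term) : term := fill_from 0 C Ms.

Definition fill1 (C : ctx) (M : term) : term := fill C (fun _ => M).

Definition star (R : rel) : rel := fun X Y =>
  exists (C : ctx) (Ms Ns : nat -> term),
    (forall i, i < nholes C -> R (Ms i) (Ns i)) /\
    X = fill C Ms /\ Y = fill C Ns /\ closed X /\ closed Y.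

Inductive bracket (R R' : rel) : rel :=
| br_base : forall X Y, R X Y -> bracket R R' X Y
| br_appL : forall M N X Y, R' M N -> bracket R R' X Y ->
    bracket R R' (App M X) (App N Y)
| br_appR : forall V W X Y, value V -> value W -> R' V W -> bracket R R' X Y ->
    bracket R R' (App X V) (App Y W).

Definition runion (R S : rel) : rel := fun X Y => R X Y \/ S X Y.

Definition rel_on_closed (R : rel) : Prop :=
  forall M N, R M N -> closed M /\ closed N.

Definition coupled (R1 R2 : rel) : Prop :=
  rel_on_closed R1 /\ rel_on_closed R2 /\ (forall M N, R1 M N -> R2 M N).

Definition cbv_cl_bisim (R1 R2 : rel) : Prop :=
  coupled R1 R2 /\
  (forall M N, R2 M N ->
     (forall M', step M M' -> exists N', steps N N' /\ R2 M' N') /\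
     (forall M', M = Lam M' -> exists N', steps N (Lam N') /\ R1 (Lam M') (Lam N') /\
        forall P Q, value P -> value Q -> star R1 P Q -> R2 (subst0 M' P) (subst0 N' Q)) /\
     (forall N', step N N' -> exists M', steps M M' /\ R2 M' N') /\
     (forall N', N = Lam N' -> exists M', steps M (Lam M') /\ R1 (Lam M') (Lam N') /\
        forall P Q, value P -> value Q -> star R1 P Q -> R2 (subst0 M' P) (subst0 N' Q))).

Definition approx1 : rel := fun M N =>
  exists R1 R2, cbv_cl_bisim R1 R2 /\ R1 M N.
Definition approx2 : rel := fun M N =>
  exists R1 R2, cbv_cl_bisim R1 R2 /\ R2 M N.

Inductive ectx : Type :=
| EHole : ectx
| EAppR : term -> ectx -> ectx
| EAppL : ectx -> term -> ectx.

Fixpoint ectx_ok (E : ectx) : Prop :=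
  match E with
  | EHole => True
  | EAppR M E => closed M /\ ectx_ok E
  | EAppL E V => value V /\ ectx_ok E
  end.

Fixpoint plug (E : ectx) (t : term) : term :=
  match E with
  | EHole => t
  | EAppR M E => App M (plug E t)
  | EAppL E V => App (plug E t) V
  end.

(* A pair in star R1 is a common context
   around R1-related closed terms: a step of it is either a step inside an
   R1-related pair, which R2 simulates, or a beta-redex assembled from related
   pieces, which the abstraction clause of R simulates; substitution preserves
   the context closure because related terms are closed, so no capture occurs.
   A bracketed pair is simulated by its bracketed component until that
   component is a value; then its partner evaluates to a related abstraction
   and the whole pair collapses into star R1.  The converse clauses are the
   forward ones for the converse relations.  Congruence follows because
   C[M] star R1 C[N] and E[M] R2<star R1>_v E[N]. *)

From Stdlib Require Import Arith Lia.

Inductive compat (R : rel) : rel :=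
| compat_base : forall M N, R M N -> compat R M N
| compat_var : forall n, compat R (Var n) (Var n)
| compat_app : forall M1 N1 M2 N2,
    compat R M1 N1 -> compat R M2 N2 -> compat R (App M1 M2) (App N1 N2)
| compat_lam : forall M N, compat R M N -> compat R (Lam M) (Lam N).

Definition flip (R : rel) : rel := fun X Y => R Y X.

Definition cbv_lift (R1 R2 : rel) : rel := runion (bracket R2 (star R1)) (star R1).

Definition concat_holes (n : nat) (Ms Ms' : nat -> term) : nat -> term :=
  fun i => if i <? n then Ms i else Ms' (i - n).

Lemma fill_from_ext C k Ms Ms' :
  (forall i, k <= i < k + nholes C -> Ms i = Ms' i) ->
  fill_from k C Ms = fill_from k C Ms'.
Proof.
  revert k; induction C; intros k H; simpl in *.
  - reflexivity.
  - apply H; lia.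
  - rewrite (IHC1 k), (IHC2 (k + nholes C1)); auto; intros; apply H; lia.
  - f_equal; auto.
Qed.

Lemma fill_from_shift C k j Ms :
  fill_from (k + j) C Ms = fill_from k C (fun i => Ms (i + j)).
Proof.
  revert k; induction C; intros k; simpl; auto.
  - rewrite IHC1, <- IHC2. do 2 f_equal. lia.
  - now rewrite IHC.
Qed.

Lemma fill_concat_holes C1 C2 Ms1 Ms2 :
  fill (CApp C1 C2) (concat_holes (nholes C1) Ms1 Ms2) =
  App (fill C1 Ms1) (fill C2 Ms2).
Proof.
  unfold fill, concat_holes; simpl; f_equal.
  - apply fill_from_ext; intros i Hi.
    destruct (Nat.ltb_spec i (nholes C1)); [reflexivity | lia].
  - rewrite (fill_from_shift C2 0 (nholes C1)).
    apply fill_from_ext; intros i Hi.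
    destruct (Nat.ltb_spec (i + nholes C1) (nholes C1)); [lia |].
    f_equal; lia.
Qed.

Lemma compat_fill_from R C k Ms Ns :
  (forall i, k <= i < k + nholes C -> R (Ms i) (Ns i)) ->
  compat R (fill_from k C Ms) (fill_from k C Ns).
Proof.
  revert k; induction C; intros k H; simpl in *.
  - apply compat_var.
  - apply compat_base, H; lia.
  - apply compat_app; [apply IHC1 | apply IHC2]; intros; apply H; lia.
  - apply compat_lam; auto.
Qed.

Lemma compat_fill_inv R X Y : compat R X Y ->
  exists C Ms Ns, (forall i, i < nholes C -> R (Ms i) (Ns i)) /\
    X = fill C Ms /\ Y = fill C Ns.
Proof.
  induction 1 as [M N H | n | M1 N1 M2 N2 _ [C1 [Ms1 [Ns1 [H1 [-> ->]]]]]
                                        _ [C2 [Ms2 [Ns2 [H2 [-> ->]]]]]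
                 | M N _ [C [Ms [Ns [H [-> ->]]]]]].
  - exists CHole, (fun _ => M), (fun _ => N); repeat split; auto.
  - exists (CVar n), (fun _ => Var 0), (fun _ => Var 0); repeat split.
    simpl; intros; lia.
  - exists (CApp C1 C2), (concat_holes (nholes C1) Ms1 Ms2),
      (concat_holes (nholes C1) Ns1 Ns2).
    rewrite !fill_concat_holes; repeat split.
    intros i Hi; unfold concat_holes; simpl in Hi.
    destruct (Nat.ltb_spec i (nholes C1)); [apply H1 | apply H2]; lia.
  - exists (CLam C), Ms, Ns; repeat split; auto.
Qed.

Lemma star_compat R X Y : star R X Y <-> compat R X Y /\ closed X /\ closed Y.
Proof.
  split.
  - intros [C [Ms [Ns [H [-> [-> [CX CY]]]]]]]; repeat split; auto.
    apply compat_fill_from; intros; apply H; lia.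
  - intros [H [CX CY]].
    destruct (compat_fill_inv _ _ _ H) as [C [Ms [Ns [HR [EX EY]]]]].
    exists C, Ms, Ns; repeat split; auto.
Qed.

Lemma star_closed R X Y : star R X Y -> closed X /\ closed Y.
Proof. now rewrite star_compat. Qed.

Lemma star_base (R : rel) X Y : R X Y -> closed X -> closed Y -> star R X Y.
Proof. intros; apply star_compat; repeat split; auto; apply compat_base; auto. Qed.

Lemma star_refl R X : closed X -> star R X X.
Proof.
  intros CX; apply star_compat; repeat split; auto.
  clear CX; induction X; [apply compat_var | apply compat_app | apply compat_lam]; auto.
Qed.

Lemma star_app R M N X Y : star R M N -> star R X Y -> star R (App M X) (App N Y).
Proof.
  rewrite !star_compat; intros [H1 [CM CN]] [H2 [CX CY]].
  repeat split; auto; apply compat_app; auto.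
Qed.

Lemma star_idem R X Y : star (star R) X Y -> star R X Y.
Proof.
  rewrite !star_compat; intros [H [CX CY]]; repeat split; auto; clear CX CY.
  induction H; [| apply compat_var | apply compat_app | apply compat_lam]; auto.
  apply star_compat in H; tauto.
Qed.

Lemma star_flip R X Y : star R X Y -> star (flip R) Y X.
Proof.
  rewrite !star_compat; intros [H [CX CY]]; repeat split; auto; clear CX CY.
  induction H; [apply compat_base | apply compat_var | apply compat_app | apply compat_lam];
    auto.
Qed.

Lemma closed_at_weaken t j k : closed_at j t -> j <= k -> closed_at k t.
Proof.
  revert j k; induction t; intros j k H Hjk; simpl in *.
  - lia.
  - destruct H; split; eauto.
  - apply (IHt (S j)); auto; lia.
Qed.

Lemma subst_closed_at_id t j k P : closed_at j t -> j <= k -> subst k P t = t.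
Proof.
  revert j k; induction t; intros j k H Hjk; simpl in *.
  - destruct (Nat.ltb_spec n k); [reflexivity | lia].
  - destruct H; f_equal; eauto.
  - f_equal; apply (IHt (S j)); auto; lia.
Qed.

Lemma closed_at_subst t k P :
  closed_at (S k) t -> closed P -> closed_at k (subst k P t).
Proof.
  revert k; induction t; intros k H HP; simpl in *.
  - destruct (Nat.ltb_spec n k); simpl; [lia |].
    destruct (Nat.eqb_spec n k); simpl; [apply (closed_at_weaken _ 0); auto | ]; lia.
  - destruct H; split; auto.
  - apply IHt; auto.
Qed.

Lemma closed_subst0 M P : closed (Lam M) -> closed P -> closed (subst0 M P).
Proof. apply closed_at_subst. Qed.

Lemma compat_subst R : rel_on_closed R -> forall M N P Q k,
  compat R M N -> compat R P Q -> compat R (subst k P M) (subst k Q N).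
Proof.
  intros HR M N P Q k H; revert k; induction H; intros k HPQ; simpl.
  - destruct (HR _ _ H) as [CM CN].
    rewrite (subst_closed_at_id M 0), (subst_closed_at_id N 0); try lia; auto.
    now apply compat_base.
  - destruct (n <? k); [apply compat_var |].
    destruct (n =? k); [assumption | apply compat_var].
  - apply compat_app; auto.
  - apply compat_lam; auto.
Qed.

Lemma steps_trans M N T : steps M N -> steps N T -> steps M T.
Proof. induction 1; eauto using steps_step. Qed.

Lemma steps_appR M N N' : closed M -> steps N N' -> steps (App M N) (App M N').
Proof. induction 2; eauto using steps, step_appR. Qed.

Lemma steps_appL M M' V : value V -> steps M M' -> steps (App M V) (App M' V).
Proof. induction 2; eauto using steps, step_appL. Qed.

Lemma steps_app M M' N V :
  closed M -> value V -> steps M M' -> steps N V -> steps (App M N) (App M' V).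
Proof.
  intros CM VV HM HN.
  eapply steps_trans; [apply steps_appR | apply steps_appL]; eauto.
Qed.

Lemma value_irreducible V T : value V -> ~ step V T.
Proof. intros [_ [b ->]] H; inversion H. Qed.

Lemma step_app_arg_inv M X T :
  step (App M X) T -> (exists X', step X X' /\ T = App M X') \/ value X.
Proof. inversion 1; subst; eauto. Qed.

Lemma step_app_fun_inv X V T : value V ->
  step (App X V) T -> (exists X', step X X' /\ T = App X' V) \/ value X.
Proof.
  intros VV; inversion 1; subst; eauto.
  - exfalso; eapply value_irreducible; eauto.
  - right; split; eauto.
Qed.

Section Lift.

Variables R1 R2 : rel.
Hypothesis bisim : cbv_cl_bisim R1 R2.

Local Notation lift := (cbv_lift R1 R2).

Lemma lift_appL M N X Y : star R1 M N -> lift X Y -> lift (App M X) (App N Y).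
Proof.
  intros S [H | H]; [left; now apply br_appL | right; now apply star_app].
Qed.

Lemma lift_appR V W X Y : value V -> value W -> star R1 V W ->
  lift X Y -> lift (App X V) (App Y W).
Proof.
  intros VV VW S [H | H]; [left; now apply br_appR | right; now apply star_app].
Qed.

Lemma bracket_closed M N : bracket R2 (star R1) M N -> closed M /\ closed N.
Proof.
  destruct bisim as [[_ [cl2 _]] _].
  induction 1 as [X Y H | M N X Y H _ IH | V W X Y [CV _] [CW _] _ _ IH]; auto.
  - apply star_closed in H; unfold closed in *; simpl; tauto.
  - unfold closed in *; simpl; tauto.
Qed.

Lemma lift_closed M N : lift M N -> closed M /\ closed N.
Proof. intros [H | H]; [apply bracket_closed | eapply star_closed]; eauto. Qed.

(* An abstraction in star R1 is either R1-related, handled by the abstraction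
   clause of R, or a lambda-context around related terms, handled by
   compat_subst. *)
Lemma star_lam_sim M' N : star R1 (Lam M') N ->
  exists N', steps N (Lam N') /\ star R1 (Lam M') (Lam N') /\
    forall P Q, value P -> value Q -> star R1 P Q -> lift (subst0 M' P) (subst0 N' Q).
Proof.
  destruct bisim as [[cl1 [_ sub12]] sim].
  intros H; apply star_compat in H as [H [CM CN]]; inversion H; subst.
  - destruct (sim _ _ (sub12 _ _ H0)) as [_ [lam _]].
    destruct (lam M' eq_refl) as [N' [St [H1 H2]]].
    exists N'; repeat split; auto.
    + destruct (cl1 _ _ H1); apply star_base; auto.
    + intros; left; apply br_base; auto.
  - exists N0; repeat split; [apply steps_refl | apply star_compat; auto |].
    intros P Q _ _ HPQ; right; apply star_compat in HPQ as [HPQ [CP CQ]].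
    apply star_compat; repeat split; [apply compat_subst | apply closed_subst0 ..]; auto.
Qed.

Lemma star_value_sim V N : value V -> star R1 V N ->
  exists W, steps N W /\ value W /\ star R1 V W.
Proof.
  intros [CV [b ->]] H.
  destruct (star_lam_sim _ _ H) as [N' [St [H1 _]]].
  exists (Lam N'); repeat split; eauto.
  apply star_closed in H1; tauto.
Qed.

Lemma star_step_sim M N M' : star R1 M N -> step M M' ->
  exists N', steps N N' /\ lift M' N'.
Proof.
  destruct bisim as [[_ [_ sub12]] sim].
  rewrite star_compat; intros [H [CM CN]]; revert M' CM CN.
  induction H as [M N H | n | M1 N1 M2 N2 H1 IH1 H2 IH2 | M N _ _];
    intros M' CM CN Hs.
  - destruct (proj1 (sim _ _ (sub12 _ _ H)) _ Hs) as [N' [St H']].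
    exists N'; split; auto; left; apply br_base; auto.
  - inversion Hs.
  - destruct CM as [CM1 CM2], CN as [CN1 CN2].
    assert (S1 : star R1 M1 N1) by (apply star_compat; auto).
    assert (S2 : star R1 M2 N2) by (apply star_compat; auto).
    inversion Hs as [? ? M2' _ Hs2 | ? M1' ? VM2 Hs1 | P ? _ VM2]; subst.
    + destruct (IH2 _ CM2 CN2 Hs2) as [N2' [St HL]].
      exists (App N1 N2'); split; [apply steps_appR | apply lift_appL]; auto.
    + destruct (star_value_sim _ _ VM2 S2) as [W [StW [VW SW]]].
      destruct (IH1 _ CM1 CN1 Hs1) as [N1' [St HL]].
      exists (App N1' W); split; [apply steps_app | apply lift_appR]; auto.
    + destruct (star_lam_sim _ _ S1) as [N1' [St [SL HL]]].
      destruct (star_value_sim _ _ VM2 S2) as [W [StW [VW SW]]].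
      exists (subst0 N1' W); split; auto.
      eapply steps_trans; [apply steps_app; eauto |].
      apply steps_step with (subst0 N1' W); [| apply steps_refl].
      apply step_beta; auto; apply star_closed in SL; tauto.
  - inversion Hs.
Qed.

Lemma bracket_value_collapse X Y : bracket R2 (star R1) X Y -> value X ->
  exists Y', steps Y Y' /\ star R1 X Y'.
Proof.
  destruct bisim as [[cl1 _] sim].
  intros H [CX [b ->]]; inversion H; subst.
  destruct (proj1 (proj2 (sim _ _ H0)) b eq_refl) as [Y' [St [HR _]]].
  exists (Lam Y'); split; auto.
  destruct (cl1 _ _ HR); apply star_base; auto.
Qed.

(* Once the bracketed component is a value, continue with star_step_sim. *)
Lemma lift_step_sim M N M' : lift M N -> step M M' ->
  exists N', steps N N' /\ lift M' N'.
Proof.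
  destruct bisim as [_ sim].
  intros [H | H]; [| apply star_step_sim; auto]; revert M'.
  induction H as [X Y H | M N X Y SMN BXY IH | V W X Y VV VW SVW BXY IH];
    intros T Hs.
  - destruct (proj1 (sim _ _ H) _ Hs) as [N' [St HR]].
    exists N'; split; auto; left; apply br_base; auto.
  - destruct (star_closed _ _ _ SMN) as [_ CN].
    destruct (step_app_arg_inv _ _ _ Hs) as [[X' [HX ->]] | VX].
    + destruct (IH _ HX) as [Y' [St HL]].
      exists (App N Y'); split; [apply steps_appR | apply lift_appL]; auto.
    + destruct (bracket_value_collapse _ _ BXY VX) as [Y' [StY SXY]].
      destruct (star_step_sim (App M X) (App N Y') T) as [N' [St HL]];
        [apply star_app | |]; auto.
      exists N'; split; auto; eapply steps_trans; [apply steps_appR |]; eauto.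
  - destruct (step_app_fun_inv _ _ _ VV Hs) as [[X' [HX ->]] | VX].
    + destruct (IH _ HX) as [Y' [St HL]].
      exists (App Y' W); split; [apply steps_appL | apply lift_appR]; auto.
    + destruct (bracket_value_collapse _ _ BXY VX) as [Y' [StY SXY]].
      destruct (star_step_sim (App X V) (App Y' W) T) as [N' [St HL]];
        [apply star_app | |]; auto.
      exists N'; split; auto; eapply steps_trans; [apply steps_appL |]; eauto.
Qed.

Lemma lift_lam_sim M' N : lift (Lam M') N ->
  exists N', steps N (Lam N') /\ star R1 (Lam M') (Lam N') /\
    forall P Q, value P -> value Q -> star R1 P Q -> lift (subst0 M' P) (subst0 N' Q).
Proof.
  destruct bisim as [[cl1 _] sim].
  intros [H | H]; [| apply star_lam_sim; auto].
  inversion H; subst.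
  destruct (proj1 (proj2 (sim _ _ H0)) M' eq_refl) as [N' [St [H1 H2]]].
  exists N'; repeat split; auto.
  - destruct (cl1 _ _ H1); apply star_base; auto.
  - intros; left; apply br_base; auto.
Qed.

End Lift.

Lemma bisim_flip R1 R2 : cbv_cl_bisim R1 R2 -> cbv_cl_bisim (flip R1) (flip R2).
Proof.
  intros [[cl1 [cl2 sub12]] sim]; split.
  - unfold flip; repeat split;
      [apply (cl1 N M) | apply (cl1 N M) | apply (cl2 N M) | apply (cl2 N M) | ];
      auto.
  - intros M N H; destruct (sim _ _ H) as [stepL [lamL [stepR lamR]]].
    repeat split; auto.
    + intros M' E; destruct (lamR M' E) as [N' [St [H1 H2]]].
      exists N'; repeat split; auto.
      intros P Q VP VQ S; apply H2, star_flip; auto.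
    + intros N' E; destruct (lamL N' E) as [M' [St [H1 H2]]].
      exists M'; repeat split; auto.
      intros P Q VP VQ S; apply H2, star_flip; auto.
Qed.

Lemma lift_flip R1 R2 M N : cbv_lift R1 R2 M N -> cbv_lift (flip R1) (flip R2) N M.
Proof.
  intros [H | H]; [left | right; apply star_flip; auto].
  induction H; [apply br_base | apply br_appL | apply br_appR];
    auto using star_flip.
Qed.

Theorem cbv_lift_bisim R1 R2 :
  cbv_cl_bisim R1 R2 -> cbv_cl_bisim (star R1) (cbv_lift R1 R2).
Proof.
  intros HB; pose proof (bisim_flip _ _ HB) as HF; split.
  - split; [intros M N; apply star_closed |].
    split; [intros M N; apply (lift_closed _ _ HB) |].
    intros; right; auto.
  - intros M N H; repeat split.
    + intros; eapply lift_step_sim; eauto.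
    + intros M' ->; destruct (lift_lam_sim _ _ HB _ _ H) as [N' [St [SL HL]]].
      exists N'; repeat split; auto; intros; apply HL, star_idem; auto.
    + intros N' Hs.
      destruct (lift_step_sim _ _ HF _ _ _ (lift_flip _ _ _ _ H) Hs) as [M' [St HL]].
      exists M'; split; [| apply (lift_flip _ _ _ _ HL)]; auto.
    + intros N' ->.
      destruct (lift_lam_sim _ _ HF _ _ (lift_flip _ _ _ _ H)) as [M' [St [SL HL]]].
      exists M'; repeat split; [| apply (star_flip _ _ _ SL) |]; auto.
      intros P Q VP VQ S.
      apply (lift_flip _ _ _ _ (HL Q P VQ VP (star_flip _ _ _ (star_idem _ _ _ S)))).
Qed.

Lemma plug_bracket R1 R2 Ec E F : ectx_ok Ec -> R2 E F ->
  bracket R2 (star R1) (plug Ec E) (plug Ec F).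
Proof.
  induction Ec as [| M Ec IH | Ec IH V]; intros Hok H; simpl in *.
  - apply br_base; auto.
  - destruct Hok; apply br_appL; auto; apply star_refl; auto.
  - destruct Hok as [VV Hok]; apply br_appR; auto; apply star_refl, VV.
Qed.

Theorem mainTheorem16 :
  (forall R1 R2 : rel, cbv_cl_bisim R1 R2 ->
     cbv_cl_bisim (star R1) (runion (bracket R2 (star R1)) (star R1))) /\
  (forall (M N : term) (C : ctx), approx1 M N ->
     closed (fill1 C M) -> closed (fill1 C N) ->
     approx1 (fill1 C M) (fill1 C N)) /\
  (forall (E F : term) (Ec : ectx), ectx_ok Ec -> approx2 E F ->
     approx2 (plug Ec E) (plug Ec F)).
Proof.
  split; [| split].
  - exact cbv_lift_bisim.
  - intros M N C [R1 [R2 [HB H]]] CM CN.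
    exists (star R1), (cbv_lift R1 R2); split; [apply cbv_lift_bisim; auto |].
    exists C, (fun _ => M), (fun _ => N); repeat split; auto.
  - intros E F Ec Hok [R1 [R2 [HB H]]].
    exists (star R1), (cbv_lift R1 R2); split; [apply cbv_lift_bisim; auto |].
    left; apply plug_bracket; auto.
Qed.
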